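(* Let $p\in(0,1]$ and let $Q=(q_{j,k})_{j,k\geq 0}$ be the generator on $\mathbb N_0$ given by $q_{j,j+1}=jp$, $q_{j,k}=\binom{j}{k}p^k(1-p)^{j-k}$ for $0\leq k\leq j-1$, $q_{j,j}=-(jp+1-p^j)$, and $q_{j,k}=0$ otherwise. Suppose $(a_k)_{k\geq 1}$ is a quasi-stationary distribution for $Q$ with eigenvalue $-\lambda$, i.e. $a_k\geq 0$, $\sum_{k\geq 1}a_k=1$ and $\sum_{j\geq 1}a_jq_{j,k}=-\lambda a_k$ for every $k\geq 1$, and suppose that $a$ has finite mean, $\sum_{k\geq1}ka_k<\infty$. Then $\lambda=1-2p$.
   Context: $Q$ is the generator of the degree of a tracked vertex in the continuous-time partial duplication graph; state $0$ is absorbing. A quasi-stationary distribution is a non-negative left eigenvector of $Q$ restricted to $\mathbb N=\{1,2,\dots\}$, summing to $1$. *)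

From Stdlib Require Import Reals.
From Coquelicot Require Import Coquelicot.
Open Scope R_scope.

(* Generator of the degree of a tracked vertex in the continuous-time
   partial duplication graph, on states j, k in N_0 (state 0 absorbing). *)
Definition Qgen (p : R) (j k : nat) : R :=
  if Nat.eqb k (S j) then INR j * p
  else if Nat.ltb k j then Binomial.C j k * p ^ k * (1 - p) ^ (j - k)
  else if Nat.eqb k j then - (INR j * p + 1 - p ^ j)
  else 0.

From Stdlib Require Import Reals Lra Lia.
From Coquelicot Require Import Coquelicot.
Open Scope R_scope.

(* Pair the eigen-equation with the tent function f_N(k) = min(k, 2N - k)^+.
   It has finite support, so only finitely many equations are combined:
   sum_j a_j (Q f_N)(j) = -lambda sum_k f_N(k) a_k.  Below N the tent is the
   identity, and Q id (j) = j (2p - 1) is the mean drift of the degree; since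
   f_N is 1-Lipschitz with 0 <= f_N(k) <= k, also |(Q f_N)(j)| <= 2j for all j.
   Hence both sides are within O(sum_{j > N} j a_j) of (2p - 1) M and
   -lambda M respectively, where M = sum_j j a_j >= sum_j a_j = 1, and letting
   N go to infinity gives (lambda + 2p - 1) M = 0. *)

Lemma sum_f_R0_zero_tail (u : nat -> R) (K L : nat) :
  (forall k, (K < k)%nat -> u k = 0) -> (K <= L)%nat -> sum_f_R0 u L = sum_f_R0 u K.
Proof.
  intros Hu HKL. induction HKL as [|L HKL IH]; [reflexivity|].
  simpl. rewrite IH, (Hu (S L)) by lia. ring.
Qed.

Lemma sum_f_R0_le_range (u : nat -> R) (K L : nat) :
  (forall k, 0 <= u k) -> (K <= L)%nat -> sum_f_R0 u K <= sum_f_R0 u L.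
Proof.
  intros Hu HKL. induction HKL as [|L HKL IH]; [lra|].
  simpl. specialize (Hu (S L)). lra.
Qed.

Lemma is_series_zero (u : nat -> R) : (forall n, u n = 0) -> is_series u 0.
Proof.
  intro Hu. change (is_lim_seq (sum_n u) 0).
  apply (is_lim_seq_ext (fun _ => 0)); [|apply is_lim_seq_const].
  intro n. rewrite (sum_n_ext _ _ _ Hu), sum_n_const. ring.
Qed.

Lemma is_series_succ_inv (u : nat -> R) (l : R) :
  u 0%nat = 0 -> is_series (fun n => u (S n)) l -> is_series u l.
Proof.
  intros Hu0 Hu. apply is_series_decr_1.
  change (is_series (fun n => u (S n)) (l + - u 0%nat)).
  rewrite Hu0, Ropp_0, Rplus_0_r. exact Hu.
Qed.

Lemma is_series_sum_f_R0 (u : nat -> nat -> R) (l : nat -> R) (K : nat) :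
  (forall k, (k <= K)%nat -> is_series (u k) (l k)) ->
  is_series (fun n => sum_f_R0 (fun k => u k n) K) (sum_f_R0 l K).
Proof.
  intros Hu. induction K as [|K IH].
  - exact (Hu 0%nat (le_n 0)).
  - exact (is_series_plus _ _ _ _ (IH (fun k Hk => Hu k (le_S _ _ Hk))) (Hu (S K) (le_n _))).
Qed.

Lemma is_series_le (u v : nat -> R) (lu lv : R) :
  (forall n, u n <= v n) -> is_series u lu -> is_series v lv -> lu <= lv.
Proof.
  intros Huv Hu Hv.
  apply (is_lim_seq_le (sum_n u) (sum_n v) lu lv); [|exact Hu|exact Hv].
  intro n. rewrite !sum_n_Reals. now apply sum_growing.
Qed.

Lemma partial_sum_le_series (u : nat -> R) (l : R) (N : nat) :
  (forall n, 0 <= u n) -> is_series u l -> sum_f_R0 u N <= l.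
Proof. intros Hu Hl. apply is_series_Reals in Hl. now apply sum_incr. Qed.

Lemma is_series_tail_abs_le (u v : nat -> R) (lu lv : R) (N : nat) :
  (forall n, Rabs (u n) <= v n) -> is_series u lu -> is_series v lv ->
  Rabs (lu - sum_f_R0 u N) <= lv - sum_f_R0 v N.
Proof.
  intros Huv Hu Hv. apply is_series_Reals in Hu, Hv.
  exact (sum_maj1 (fun n _ => u n) v 0 lu lv N Hu Hv (fun n => Huv n)).
Qed.

Lemma le_0_of_le_series_tails (u : nat -> R) (l c K : R) :
  is_series u l -> (forall N, c <= K * (l - sum_f_R0 u N)) -> c <= 0.
Proof.
  intros Hu Hc.
  assert (Htail : is_lim_seq (fun N => K * (l - sum_f_R0 u N)) (K * (l - l))).
  { apply (is_lim_seq_scal_l _ K (l - l)), is_lim_seq_minus'; [apply is_lim_seq_const|].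
    apply (is_lim_seq_ext (sum_n u)); [intro; apply sum_n_Reals|exact Hu]. }
  replace (K * (l - l)) with 0 in Htail by ring.
  exact (is_lim_seq_le (fun _ => c) _ c 0 Hc (is_lim_seq_const c) Htail).
Qed.

Definition binom_weight (p : R) (j k : nat) : R :=
  Binomial.C j k * p ^ k * (1 - p) ^ (j - k).

Lemma binom_weight_nonneg p j k : 0 <= p <= 1 -> 0 <= binom_weight p j k.
Proof.
  intro Hp. unfold binom_weight, Binomial.C, Rdiv.
  assert (0 < INR (Factorial.fact k) * INR (Factorial.fact (j - k))).
  { apply Rmult_lt_0_compat; apply INR_fact_lt_0. }
  repeat apply Rmult_le_pos; try apply pos_INR; try (apply pow_le; lra).
  left; now apply Rinv_0_lt_compat.
Qed.

Lemma sum_binom_weight p j : sum_f_R0 (binom_weight p j) j = 1.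
Proof.
  unfold binom_weight. rewrite <- binomial.
  replace (p + (1 - p)) with 1 by ring. apply pow1.
Qed.

Lemma binomial_absorption m i : (i <= m)%nat ->
  INR (S i) * Binomial.C (S m) (S i) = INR (S m) * Binomial.C m i.
Proof.
  intro Him. unfold Binomial.C. replace (S m - S i)%nat with (m - i)%nat by lia.
  change (Factorial.fact (S m)) with (S m * Factorial.fact m)%nat.
  change (Factorial.fact (S i)) with (S i * Factorial.fact i)%nat.
  rewrite !mult_INR.
  assert (INR (S i) <> 0) by (apply not_0_INR; lia).
  field. split; [|split]; try assumption; apply INR_fact_neq_0.
Qed.

Lemma sum_binom_weight_mean p j :
  sum_f_R0 (fun k => INR k * binom_weight p j k) j = INR j * p.
Proof.
  destruct j as [|m]; [simpl; ring|].
  rewrite decomp_sum by lia. simpl pred.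
  rewrite (sum_eq _ (fun i => binom_weight p m i * (INR (S m) * p))).
  - rewrite <- scal_sum, sum_binom_weight. simpl (INR 0). ring.
  - intros i Hi. unfold binom_weight.
    replace (S m - S i)%nat with (m - i)%nat by lia.
    transitivity (INR (S i) * Binomial.C (S m) (S i) * p ^ S i * (1 - p) ^ (m - i)); [ring|].
    rewrite binomial_absorption by lia. simpl (p ^ S i). ring.
Qed.

Lemma Qgen_succ p j : Qgen p j (S j) = INR j * p.
Proof. unfold Qgen. now rewrite Nat.eqb_refl. Qed.

Lemma Qgen_lt p j k : (k < j)%nat -> Qgen p j k = binom_weight p j k.
Proof.
  intro Hkj. unfold Qgen.
  destruct (Nat.eqb_spec k (S j)); [lia|]. destruct (Nat.ltb_spec k j); [reflexivity|lia].
Qed.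

Lemma Qgen_diag p j : Qgen p j j = binom_weight p j j - (INR j * p + 1).
Proof.
  unfold Qgen, binom_weight.
  destruct (Nat.eqb_spec j (S j)); [lia|]. destruct (Nat.ltb_spec j j); [lia|].
  rewrite Nat.eqb_refl, C_n_n, Nat.sub_diag. ring.
Qed.

Lemma Qgen_gt p j k : (S j < k)%nat -> Qgen p j k = 0.
Proof.
  intro Hjk. unfold Qgen.
  destruct (Nat.eqb_spec k (S j)); [lia|]. destruct (Nat.ltb_spec k j); [lia|].
  destruct (Nat.eqb_spec k j); [lia|reflexivity].
Qed.

(* (Q f)(j): row j of Q has no entries beyond column j + 1. *)
Definition Qapply (p : R) (f : nat -> R) (j : nat) : R :=
  sum_f_R0 (fun k => Qgen p j k * f k) (S j).

Lemma Qapply_binomial p f j :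
  Qapply p f j =
  INR j * p * (f (S j) - f j) + sum_f_R0 (fun k => binom_weight p j k * (f k - f j)) j.
Proof.
  unfold Qapply. rewrite tech5, Qgen_succ.
  assert (Hrow : sum_f_R0 (fun k => Qgen p j k * f k) j =
                 sum_f_R0 (fun k => binom_weight p j k * f k) j - (INR j * p + 1) * f j).
  { destruct j as [|i].
    - cbn [sum_f_R0]. rewrite Qgen_diag. ring.
    - rewrite !tech5, Qgen_diag, (sum_eq _ (fun k => binom_weight p (S i) k * f k)); [ring|].
      intros k Hk. now rewrite Qgen_lt by lia. }
  rewrite Hrow, (sum_eq (fun k => binom_weight p j k * (f k - f j))
    (fun k => binom_weight p j k * f k - binom_weight p j k * f j)) by (intros; ring).
  rewrite minus_sum, <- (scal_sum (binom_weight p j)), sum_binom_weight. ring.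
Qed.

Lemma Qapply_INR p j : Qapply p INR j = INR j * (2 * p - 1).
Proof.
  rewrite Qapply_binomial.
  rewrite (sum_eq (fun k => binom_weight p j k * (INR k - INR j))
    (fun k => INR k * binom_weight p j k - binom_weight p j k * INR j)) by (intros; ring).
  rewrite minus_sum, <- (scal_sum (binom_weight p j)), sum_binom_weight, sum_binom_weight_mean,
    S_INR.
  ring.
Qed.

Lemma Qapply_abs_le p f j :
  0 <= p <= 1 -> (forall k, (k <= j)%nat -> 0 <= f k <= INR j) ->
  Rabs (f (S j) - f j) <= 1 -> Rabs (Qapply p f j) <= 2 * INR j.
Proof.
  intros Hp Hf Hstep. rewrite Qapply_binomial.
  assert (Hj := pos_INR j).
  assert (Hdup : Rabs (INR j * p * (f (S j) - f j)) <= INR j).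
  { rewrite Rabs_mult, (Rabs_pos_eq (INR j * p)) by nra.
    apply Rle_trans with (INR j * p * 1); [apply Rmult_le_compat_l|]; nra. }
  assert (Hthin : Rabs (sum_f_R0 (fun k => binom_weight p j k * (f k - f j)) j) <= INR j).
  { eapply Rle_trans; [apply sum_f_R0_triangle|].
    apply Rle_trans with (sum_f_R0 (fun k => binom_weight p j k * INR j) j).
    - apply sum_Rle. intros k Hk.
      rewrite Rabs_mult, (Rabs_pos_eq (binom_weight p j k)) by now apply binom_weight_nonneg.
      apply Rmult_le_compat_l; [now apply binom_weight_nonneg|].
      apply Rabs_le. pose proof (Hf k Hk). pose proof (Hf j (le_n j)). lra.
    - rewrite <- scal_sum, sum_binom_weight. lra. }
  eapply Rle_trans; [apply Rabs_triang|]. lra.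
Qed.

Lemma Qapply_sum_f_R0 p f j K :
  (forall k, (K < k)%nat -> f k = 0) ->
  sum_f_R0 (fun k => Qgen p j k * f k) K = Qapply p f j.
Proof.
  intro Hf. unfold Qapply.
  rewrite <- (sum_f_R0_zero_tail _ K (Nat.max K (S j)));
    [| intros k Hk; rewrite Hf by lia; ring | lia].
  apply sum_f_R0_zero_tail; [intros k Hk; rewrite Qgen_gt by lia; ring | lia].
Qed.

Lemma is_series_Qapply p lambda (a f : nat -> R) K :
  (forall k, (1 <= k)%nat -> is_series (fun j => a j * Qgen p j k) (- lambda * a k)) ->
  f 0%nat = 0 -> (forall k, (K < k)%nat -> f k = 0) ->
  is_series (fun j => a j * Qapply p f j) (- lambda * sum_f_R0 (fun k => f k * a k) K).
Proof.
  intros Heig Hf0 Hf.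
  replace (- lambda * sum_f_R0 (fun k => f k * a k) K)
    with (sum_f_R0 (fun k => f k * (- lambda * a k)) K)
    by (rewrite scal_sum; apply sum_eq; intros; ring).
  apply (is_series_ext (fun j => sum_f_R0 (fun k => f k * (a j * Qgen p j k)) K)).
  { intro j. rewrite <- (Qapply_sum_f_R0 p f j K Hf), scal_sum. apply sum_eq; intros; ring. }
  apply is_series_sum_f_R0. intros [|k] _.
  - cbv beta. rewrite Hf0, Rmult_0_l. apply is_series_zero. intro; ring.
  - exact (is_series_scal _ _ _ (Heig (S k) ltac:(lia))).
Qed.

Definition tent (N k : nat) : R := INR (Nat.min k (2 * N - k)).

Lemma tent_id N k : (k <= N)%nat -> tent N k = INR k.
Proof. intro HkN. unfold tent. f_equal. lia. Qed.

Lemma tent_bounds N k : 0 <= tent N k <= INR k.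
Proof. split; [apply pos_INR | apply le_INR; lia]. Qed.

Lemma tent_support N k : (2 * N < k)%nat -> tent N k = 0.
Proof.
  intro Hk. unfold tent. replace (Nat.min k (2 * N - k)) with 0%nat by lia. reflexivity.
Qed.

Lemma tent_step N k : Rabs (tent N (S k) - tent N k) <= 1.
Proof.
  unfold tent. apply Rabs_le.
  destruct (Nat.le_gt_cases (S k) N).
  - rewrite (Nat.min_l (S k)), (Nat.min_l k), S_INR by lia. lra.
  - rewrite (Nat.min_r (S k)), (Nat.min_r k) by lia.
    destruct (Nat.le_gt_cases (S k) (2 * N)).
    + replace (2 * N - k)%nat with (S (2 * N - S k)) by lia. rewrite S_INR. lra.
    + replace (2 * N - k)%nat with (2 * N - S k)%nat by lia. lra.
Qed.

Section Quasi_stationary.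

Variables (p lambda M : R) (a : nat -> R).
Hypothesis p_range : 0 <= p <= 1.
Hypothesis a_nonneg : forall j, 0 <= a j.
Hypothesis eigen :
  forall k, (1 <= k)%nat -> is_series (fun j => a j * Qgen p j k) (- lambda * a k).
Hypothesis mean : is_series (fun j => INR j * a j) M.

Let tent_moment (N : nat) : R := sum_f_R0 (fun k => tent N k * a k) (2 * N).

Lemma tent_moment_bounds N :
  sum_f_R0 (fun j => INR j * a j) N <= tent_moment (S N) <= M.
Proof.
  assert (Hterm : forall k, 0 <= tent (S N) k * a k <= INR k * a k).
  { intro k. pose proof (tent_bounds (S N) k). pose proof (a_nonneg k). split; nra. }
  split.
  - rewrite (sum_eq _ (fun k => tent (S N) k * a k)) by (intros; rewrite tent_id by lia; ring).
    apply sum_f_R0_le_range; [intro k; apply Hterm | lia].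
  - apply Rle_trans with (sum_f_R0 (fun j => INR j * a j) (2 * S N)).
    + apply sum_Rle. intros k _. apply Hterm.
    + apply partial_sum_le_series; [|exact mean].
      intro j. pose proof (pos_INR j). pose proof (a_nonneg j). nra.
Qed.

Lemma tent_moment_drift N :
  Rabs ((2 * p - 1) * M + lambda * tent_moment (S N)) <=
  3 * (M - sum_f_R0 (fun j => INR j * a j) N).
Proof.
  set (d := fun j => (2 * p - 1) * (INR j * a j) - a j * Qapply p (tent (S N)) j).
  assert (Hd : is_series d ((2 * p - 1) * M - - lambda * tent_moment (S N))).
  { apply (is_series_minus _ _ _ _ (is_series_scal _ _ _ mean)).
    apply is_series_Qapply; [exact eigen | apply (tent_id (S N) 0); lia |].
    intros k Hk. apply tent_support. lia. }
  assert (Hlow : forall j, (j <= N)%nat -> d j = 0).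
  { intros j Hj. unfold d.
    replace (Qapply p (tent (S N)) j) with (Qapply p INR j).
    - rewrite Qapply_INR. ring.
    - unfold Qapply. apply sum_eq. intros k Hk. rewrite tent_id by lia. reflexivity. }
  assert (Hbound : forall j, Rabs (d j) <= INR j * a j * 3).
  { intro j. unfold d.
    assert (HQ : Rabs (Qapply p (tent (S N)) j) <= 2 * INR j).
    { apply Qapply_abs_le; [exact p_range | | apply tent_step].
      intros k Hk. pose proof (tent_bounds (S N) k). pose proof (le_INR _ _ Hk). lra. }
    apply Rabs_le_between in HQ.
    pose proof (a_nonneg j). pose proof (pos_INR j).
    assert (0 <= INR j * a j) by nra.
    assert (a j * Qapply p (tent (S N)) j <= a j * (2 * INR j))
      by (apply Rmult_le_compat_l; lra).
    assert (a j * - (2 * INR j) <= a j * Qapply p (tent (S N)) j)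
      by (apply Rmult_le_compat_l; lra).
    apply Rabs_le_between. split; nra. }
  assert (Htail := is_series_tail_abs_le d _ _ _ N Hbound Hd (is_series_scal_r 3 _ _ mean)).
  rewrite (sum_eq d (fun _ => 0)) in Htail by exact Hlow.
  rewrite sum_cte, <- scal_sum in Htail.
  replace ((2 * p - 1) * M - - lambda * tent_moment (S N) - 0 * INR (S N))
    with ((2 * p - 1) * M + lambda * tent_moment (S N)) in Htail by ring.
  lra.
Qed.

Lemma eigenvalue_balance : (lambda + 2 * p - 1) * M = 0.
Proof.
  assert (Hc : Rabs ((lambda + 2 * p - 1) * M) <= 0).
  { apply (le_0_of_le_series_tails _ M _ (Rabs lambda + 3) mean). intro N.
    pose proof (tent_moment_bounds N) as Hmom. pose proof (tent_moment_drift N) as Hdrift.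
    set (partial := sum_f_R0 (fun j => INR j * a j) N) in *.
    set (A := tent_moment (S N)) in *.
    replace ((lambda + 2 * p - 1) * M) with ((2 * p - 1) * M + lambda * A + lambda * (M - A))
      by ring.
    eapply Rle_trans; [apply Rabs_triang|].
    rewrite Rabs_mult, (Rabs_pos_eq (M - A)) by lra.
    assert (Rabs lambda * (M - A) <= Rabs lambda * (M - partial))
      by (apply Rmult_le_compat_l; [apply Rabs_pos | lra]).
    lra. }
  apply Rabs_eq_0. pose proof (Rabs_pos ((lambda + 2 * p - 1) * M)). lra.
Qed.

End Quasi_stationary.

Theorem proposition2 (p lambda : R) (a : nat -> R) :
  0 < p <= 1 ->
  (forall k : nat, (1 <= k)%nat -> 0 <= a k) ->
  is_series (fun n : nat => a (S n)) 1 ->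
  (forall k : nat, (1 <= k)%nat ->
     is_series (fun n : nat => a (S n) * Qgen p (S n) k) (- lambda * a k)) ->
  ex_series (fun n : nat => INR (S n) * a (S n)) ->
  lambda = 1 - 2 * p.
Proof.
  intros Hp Ha Hmass Heig [M HM].
  (* a 0 is unconstrained; setting it to 0 lets every series start at j = 0. *)
  set (b := fun j => match j with 0%nat => 0 | S _ => a j end).
  assert (Hb : forall j, 0 <= b j) by (intros [|j]; [simpl; lra | apply Ha; lia]).
  assert (HbM : is_series (fun j => INR j * b j) M)
    by (apply is_series_succ_inv; [simpl; ring | exact HM]).
  assert (Hbeig : forall k, (1 <= k)%nat ->
            is_series (fun j => b j * Qgen p j k) (- lambda * b k)).
  { intros [|k] Hk; [lia|]. apply is_series_succ_inv; [simpl; ring | exact (Heig (S k) Hk)]. }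
  assert (HM1 : 1 <= M).
  { refine (is_series_le _ _ _ _ _ Hmass HM). intro n.
    pose proof (Ha (S n) ltac:(lia)). pose proof (pos_INR n). rewrite S_INR. nra. }
  destruct (Rmult_integral _ _ (eigenvalue_balance p lambda M b ltac:(lra) Hb Hbeig HbM));
    lra.
Qed.
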